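(* Let $\mathbf X\in\mathbb R^{N\times d}$ (rows $x_1^T,\dots,x_N^T$) with $\mathbf X^T\mathbf X=\mathbf V\mathbf S\mathbf V^T$ positive definite, $\mathbf S=\mathrm{diag}(s_1,\dots,s_d)$, $s_{\min}=\min_i s_i$, and let $\mathbf y\in\mathbb R^N$. Let $0<\eta\le1/\|\mathbf X^T\mathbf X\|_{\mathrm{op}}$ and define the gradient descent iterates $w_0=0$, $w_t=w_{t-1}+\eta\mathbf X^T(\mathbf y-\mathbf Xw_{t-1})$, so $w_t=\mathbf V\mathbf S^{-1}(\mathbf I-(\mathbf I-\eta\mathbf S)^t)\mathbf V^T\mathbf X^T\mathbf y$. For $\lambda=\frac1{t\eta}$ let $\widetilde w_\lambda=(\mathbf X^T\mathbf X+\lambda\mathbf I)^{-1}\mathbf X^T\mathbf y$. Let $f_t(x)=w_t^Tx$, $\widetilde f_\lambda(x)=\widetilde w_\lambda^Tx$, and $c(t,\eta)=\min\big(0.25,\frac1{s_{\min}^2t^2\eta^2}\big)$. Then $$\sum_{i=1}^N(f_t(x_i)-\widetilde f_\lambda(x_i))^2\le c(t,\eta)\sum_{i=1}^N f_t(x_i)^2,$$ and, for a distribution $\mathcal D_{\mathcal X}$ on $\mathbb R^d$ with positive definite second-moment matrix $\Sigma=\mathbb E_{x\sim\mathcal D_{\mathcal X}}[xx^T]$ of condition number $\kappa$, $$\mathbb E_{x\sim\mathcal D_{\mathcal X}}\big[(f_t(x)-\widetilde f_\lambda(x))^2\big]\le\kappa\, c(t,\eta)\,\mathbb E_{x\sim\mathcal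 D_{\mathcal X}}\big[f_t(x)^2\big].$$
   Context: $t\ge1$ is an integer. $\|\cdot\|_{\mathrm{op}}$ is the operator norm; $\kappa$ is the ratio of largest to smallest eigenvalue of $\Sigma$. *)

From HB Require Import structures.
From mathcomp Require Import all_boot all_order all_algebra.
From mathcomp Require Import all_classical all_reals all_analysis.
Set Implicit Arguments. Unset Strict Implicit. Unset Printing Implicit Defensive.
Import Order.TTheory GRing.Theory Num.Theory.
Local Open Scope classical_set_scope.
Local Open Scope ring_scope.

Section Defs.
Variable R : realType.

Definition vnorm n (v : 'cV[R]_n) : R := Num.sqrt (\sum_i v i 0 ^+ 2).

Definition opnorm n (A : 'M[R]_n) : R :=
  sup [set r | exists v : 'cV[R]_n, vnorm v <= 1 /\ r = vnorm (A *m v)].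

Fixpoint gd N d (X : 'M[R]_(N, d)) (y : 'cV[R]_N) (eta : R) (t : nat) : 'cV[R]_d :=
  match t with
  | 0 => 0
  | t'.+1 => gd X y eta t' + eta *: (X^T *m (y - X *m gd X y eta t'))
  end.

Definition ridge N d (X : 'M[R]_(N, d)) (y : 'cV[R]_N) (lambda : R) : 'cV[R]_d :=
  invmx (X^T *m X + lambda%:M) *m (X^T *m y).

Definition linf d (w x : 'cV[R]_d) : R := \sum_j w j 0 * x j 0.

Definition datapt N d (X : 'M[R]_(N, d)) (i : 'I_N) : 'cV[R]_d := (row i X)^T.

Definition eigs n (A : 'M[R]_n) : set R := [set a | eigenvalue A a].
Definition cond_number n (A : 'M[R]_n) : R := sup (eigs A) / inf (eigs A).

Definition cte (smin : R) (t : nat) (eta : R) : R :=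
  Num.min (1 / 4) (1 / (smin ^+ 2 * t%:R ^+ 2 * eta ^+ 2)).

End Defs.
Arguments datapt {R N d} X i.

From HB Require Import structures.
From mathcomp Require Import all_boot all_order all_algebra.
From mathcomp Require Import all_classical all_reals all_analysis.
From mathcomp Require Import complex spectral sesquilinear.
From mathcomp Require Import ring lra.
Set Implicit Arguments. Unset Strict Implicit. Unset Printing Implicit Defensive.
Import Order.TTheory GRing.Theory Num.Theory.
Local Open Scope classical_set_scope.
Local Open Scope ring_scope.

(* Write X^T X = V diag(s) V^T with V orthogonal and s > 0.  In the eigenbasis
   both estimators act coordinatewise on b = V^T X^T y: t steps of gradient
   descent multiply b_j by g_j = (1 - (1 - eta s_j)^t) / s_j, while ridge with
   lambda = 1/(t eta) multiplies it by r_j = 1/(s_j + lambda).  A one-variable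
   inequality (spectral_filter_gap) gives (g_j - r_j)^2 <= c(t,eta) g_j^2 when
   0 < s_min <= s_j and eta s_j <= 1, i.e. u = w_t - w_lambda is dominated by
   c(t,eta) w_t coordinatewise in the eigenbasis (shrinkage_coord).
   - On the sample, sum_i f(x_i)^2 = w^T X^T X w = sum_j s_j (V^T w)_j^2, so the
     coordinatewise bound sums up directly (quad_le_coord).
   - In population, E[f(x)^2] = w^T Sigma w (second_moment_quad), and the
     Rayleigh bounds lambda_min |u|^2 <= u^T Sigma u <= lambda_max |u|^2, proved
     from the complex spectral theorem, turn |u|^2 <= c |w_t|^2 into the bound
     with the condition number kappa (quad_le_cond_number). *)

Local Notation sqnorm v := ((v^T *m v) 0 0).
Local Notation quad A v := ((v^T *m A *m v) 0 0).

Lemma bernoulli_pow_bounds (R : realType) (x : R) (n : nat) : 0 <= x -> x <= 1 ->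
  [/\ 0 <= (1 - x) ^+ n, (1 - x) ^+ n <= 1, 1 - (1 - x) ^+ n <= x * n%:R &
      (1 + x * n%:R) * (1 - x) ^+ n <= 1].
Proof.
move=> x0 x1; elim: n => [|n [h0 h1 h2 h3]].
  by rewrite expr0 mulr0 addr0 mul1r subrr; split => //; lra.
rewrite exprS -natr1; split.
- by apply: mulr_ge0 => //; lra.
- nra.
- nra.
- nra.
Qed.

(* With z = x t, the ridge/GD gap numerator q = 1 - p (1 + z) is dominated by
   g = (1 - p)(1 + z) with ratios 1/2 and 1/z. *)
Lemma filter_gap_ratio (R : realType) (x : R) (t : nat) : 0 <= x -> x <= 1 ->
  let p := (1 - x) ^+ t in let z := x * t%:R in
  let q := 1 - p * (1 + z) in let g := (1 - p) * (1 + z) in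
  [/\ 0 <= q, 2 * q <= g & z * q <= g].
Proof.
move=> x0 x1 p z q g.
have [p0 p1 hb ha] := @bernoulli_pow_bounds R x t x0 x1.
rewrite -/p -/z in p0 p1 hb ha.
have z0 : 0 <= z by apply: mulr_ge0.
split; rewrite /q /g.
- lra.
- case: (lerP z 1) => hz; nra.
- nra.
Qed.

Lemma spectral_filter_gap (R : realType) (s smin eta : R) (t : nat) :
  0 < smin -> smin <= s -> 0 < eta -> eta * s <= 1 -> (1 <= t)%N ->
  ((1 - (1 - eta * s) ^+ t) / s - 1 / (s + 1 / (t%:R * eta))) ^+ 2
    <= cte smin t eta * ((1 - (1 - eta * s) ^+ t) / s) ^+ 2.
Proof.
move=> sm0 sms e0 es1 t1.
have s0 : 0 < s by lra.
have T1 : 1 <= t%:R :> R by rewrite ler1n.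
have [q0 hq2 hqz] := @filter_gap_ratio R (eta * s) t (ltW (mulr_gt0 e0 s0)) es1.
set T : R := t%:R in T1 hq2 hqz *.
set p := (1 - eta * s) ^+ t in q0 hq2 hqz *.
set z := eta * s * T in q0 hq2 hqz.
set q := 1 - p * (1 + z) in q0 hq2 hqz.
set g := (1 - p) * (1 + z) in hq2 hqz.
have z0 : 0 < z by rewrite /z; apply: mulr_gt0 => //; [apply: mulr_gt0|lra].
have Z0 : 0 < (1 + z) * s by apply: mulr_gt0 => //; lra.
have -> : (1 - p) / s - 1 / (s + 1 / (T * eta)) = q / ((1 + z) * s).
  rewrite /q /z; field; rewrite -/T.
  by apply/and4P; split; apply: lt0r_neq0; rewrite -?/z; lra.
have -> : (1 - p) / s = g / ((1 + z) * s).
  by rewrite /g; field; apply/andP; split; apply: lt0r_neq0; lra.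
set m := smin * T * eta.
have m0 : 0 < m by apply: mulr_gt0 => //; apply: mulr_gt0 => //; lra.
have mz : m * q <= g.
  have : 0 <= (s - smin) * (T * eta) * q.
    by apply: mulr_ge0 => //; apply: mulr_ge0; [lra | apply: mulr_ge0; lra].
  have -> : m * q = z * q - (s - smin) * (T * eta) * q by rewrite /z /m; ring.
  lra.
rewrite /cte (_ : 1 / (smin ^+ 2 * T ^+ 2 * eta ^+ 2) = (m ^+ 2)^-1); last first.
  by rewrite /m !exprMn mul1r.
rewrite /Order.min !expr_div_n mulrA ler_pM2r ?invr_gt0 ?exprn_gt0 //.
case: ifP => _; first nra.
rewrite mulrC ler_pdivlMr ?exprn_gt0 // -exprMn lerXn2r ?nnegrE //; nra.
Qed.

Section NormalSpectrum.
Variables (C : numClosedFieldType) (n : nat).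

(* Each diagonal entry of the spectral decomposition of a normal matrix is an
   eigenvalue: the corresponding row of the unitary factor is an eigenvector. *)
Lemma spectral_diag_eigenvalue (A : 'M[C]_n) i :
  A \is normalmx -> eigenvalue A (spectral_diag A 0 i).
Proof.
move=> /orthomx_spectralP; set P := spectralmx A; set D := spectral_diag A.
have Pu : P \is unitarymx := spectral_unitarymx A.
have PPt : P *m (P ^t Num.conj)%sesqui = 1%:M := unitarymxP Pu.
rewrite invmx_unitary // => AE.
apply/eigenvalueP; exists (row i P).
  have : P *m A = diag_mx D *m P by rewrite {1}AE !mulmxA PPt mul1mx.
  move/(congr1 (row i)); rewrite row_mul => ->.
  by apply/rowP => k; rewrite mul_diag_mx !mxE.
apply/negP => /eqP Pi0; move/matrixP/(_ i i): PPt; rewrite !mxE eqxx /=.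
rewrite big1 => [/eqP|k _]; first by rewrite eq_sym oner_eq0.
by move/matrixP/(_ 0 k): Pi0; rewrite !mxE => ->; rewrite mul0r.
Qed.

End NormalSpectrum.

Section RealSymmetric.
Variable R : realType.
Local Notation C := (R[i]).
Local Notation f := (real_complex R).

Lemma conj_real_complex (r : R) : (f r)^* = f r.
Proof. exact: conjc_real. Qed.

Lemma real_complexRe (z : C) : z \is Num.real -> z = f (complex.Re z).
Proof.
rewrite realE => /orP[h|h].
  by have := ger0_Im h; case: z h => a b /= _ ->.
have : 0 <= - z by rewrite oppr_ge0.
move/ger0_Im; case: z h => a b /= _.
by move/eqP; rewrite oppr_eq0 => /eqP ->.
Qed.

Lemma eigenvalue_complexify n (S : 'M[R]_n) a :
  eigenvalue (map_mx f S) (f a) -> eigenvalue S a.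
Proof.
by rewrite !eigenvalue_root_char -map_char_poly fmorph_root.
Qed.

Lemma symmetric_spectral_form n (S : 'M[R]_n) : S^T = S ->
  exists (a : 'I_n -> R) (Q : 'M[C]_n), (forall i, eigenvalue S (a i)) /\
  forall u : 'cV[R]_n,
    f (quad S u) = \sum_i f (a i) * `|(map_mx f u^T *m Q) 0 i| ^+ 2 /\
    f (sqnorm u) = \sum_i `|(map_mx f u^T *m Q) 0 i| ^+ 2.
Proof.
move=> symS; pose Sc := map_mx f S.
have herm : Sc \is hermsymmx.
  apply/is_hermitianmxP; rewrite expr0 scale1r; apply/matrixP => i j.
  by rewrite !mxE conj_real_complex -[in LHS]symS mxE.
have normal := hermitian_normalmx herm.
have /orthomx_spectralP Seq := normal.
set P := spectralmx Sc in Seq; set D := spectral_diag Sc in Seq.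
have Pu : P \is unitarymx := spectral_unitarymx Sc.
have PtP : (P ^t Num.conj)%sesqui *m P = 1%:M := mulmx1C (unitarymxP Pu).
rewrite invmx_unitary // in Seq.
pose a i := complex.Re (D 0 i).
have Df i : D 0 i = f (a i).
  by apply: real_complexRe; apply: (mxOverP (hermitian_spectral_diag_real herm)).
exists a, (P ^t Num.conj)%sesqui; split.
  by move=> i; apply: eigenvalue_complexify; rewrite -Df; exact: spectral_diag_eigenvalue.
move=> u; set w := map_mx f u^T *m (P ^t Num.conj)%sesqui.
have wT : (w ^t Num.conj)%sesqui = P *m map_mx f u.
  rewrite trmx_mul map_mxM trmxCK; congr (_ *m _).
  by apply/matrixP => i j; rewrite !mxE; exact: conj_real_complex.
have fmx m (M : 'M[R]_(1, m)) (v : 'cV[R]_m) : f ((M *m v) 0 0) = (map_mx f M *m map_mx f v) 0 0.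
  by rewrite -map_mxM [RHS]mxE.
split.
  rewrite fmx map_mxM -/Sc Seq !mulmxA -[_ *m P *m _]mulmxA -/w -wT mxE.
  by apply: eq_bigr => i _; rewrite mul_mx_diag !mxE normCK Df mulrCA mulrA.
rewrite fmx -[map_mx f u^T]mulmx1 -PtP mulmxA -/w -mulmxA -wT mxE.
by apply: eq_bigr => i _; rewrite !mxE normCK.
Qed.

Lemma rayleigh n (S : 'M[R]_n.+1) : S^T = S ->
  exists a b : R, [/\ eigenvalue S a, eigenvalue S b &
   forall u : 'cV[R]_n.+1, a * sqnorm u <= quad S u /\ quad S u <= b * sqnorm u].
Proof.
move=> /symmetric_spectral_form [a [Q [eig form]]].
pose imin := Order.arg_min (ord0 : 'I_n.+1) xpredT a.
pose imax := Order.arg_max (ord0 : 'I_n.+1) xpredT a.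
have amin j : a imin <= a j by rewrite /imin; case: arg_minP => // i _; apply.
have amax j : a j <= a imax by rewrite /imax; case: arg_maxP => // i _; apply.
exists (a imin), (a imax); split => // u.
have [fq fn] := form u; set w := map_mx f u^T *m Q in fq fn.
have fscale c : f (c * sqnorm u) = \sum_i f c * `|w 0 i| ^+ 2.
  by rewrite rmorphM /= fn mulr_sumr.
split; rewrite -lecR fq fscale; apply: ler_sum => i _;
  by apply: ler_wpM2r; [exact: exprn_ge0 | rewrite lecR].
Qed.

End RealSymmetric.

Lemma sqnorm_sum (R : realType) n (v : 'cV[R]_n) : sqnorm v = \sum_i v i 0 ^+ 2.
Proof. by rewrite mxE; apply: eq_bigr => i _; rewrite !mxE expr2. Qed.

Lemma vnorm_sqnorm (R : realType) n (v : 'cV[R]_n) : vnorm v = Num.sqrt (sqnorm v).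
Proof. by rewrite sqnorm_sum. Qed.

Section OrthogonalDiagonalization.
Variables (R : realType) (n : nat) (V : 'M[R]_n) (s : 'rV[R]_n).
Hypothesis VtV : V^T *m V = 1%:M.
Let VVt : V *m V^T = 1%:M := mulmx1C VtV.
Local Notation A := (V *m diag_mx s *m V^T).

Lemma orth_sqnorm (v : 'cV[R]_n) : sqnorm (V^T *m v) = sqnorm v.
Proof. by rewrite trmx_mul trmxK mulmxA -[_ *m V *m _]mulmxA VVt mulmx1. Qed.

Lemma quad_diag (w : 'cV[R]_n) : quad A w = \sum_j s 0 j * (V^T *m w) j 0 ^+ 2.
Proof.
have -> : w^T *m A *m w = (V^T *m w)^T *m diag_mx s *m (V^T *m w).
  by rewrite trmx_mul trmxK !mulmxA.
by rewrite mxE; apply: eq_bigr => j _; rewrite mul_mx_diag !mxE; ring.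
Qed.

Lemma sqnorm_image (v : 'cV[R]_n) :
  sqnorm (A *m v) = \sum_j (s 0 j * (V^T *m v) j 0) ^+ 2.
Proof.
rewrite -orth_sqnorm (_ : V^T *m (A *m v) = diag_mx s *m (V^T *m v)).
  by rewrite sqnorm_sum; apply: eq_bigr => j _; rewrite mul_diag_mx mxE.
by rewrite !mulmxA VtV mul1mx.
Qed.

Lemma eigvec_coord (j : 'I_n) :
  V^T *m (V *m delta_mx j 0) = delta_mx j 0 :> 'cV[R]_n.
Proof. by rewrite mulmxA VtV mul1mx. Qed.

Lemma sum_delta (F : 'I_n -> R -> R) (j : 'I_n) : (forall k, F k 0 = 0) ->
  \sum_(k < n) F k (@delta_mx R n 1 j 0 k 0) = F j 1.
Proof.
move=> F0; rewrite (bigD1 j) //= big1 ?addr0 => [|k kj]; first by rewrite mxE !eqxx.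
by rewrite mxE (negbTE kj).
Qed.

Lemma diag_pos : (forall v : 'cV[R]_n, v != 0 -> 0 < quad A v) -> forall j, 0 < s 0 j.
Proof.
move=> PD j; have := PD (V *m delta_mx j 0).
rewrite quad_diag eigvec_coord (@sum_delta (fun k x => s 0 k * x ^+ 2)) => [|k];
  last by rewrite expr0n mulr0.
rewrite expr1n mulr1; apply; apply/eqP => /(congr1 (mulmx V^T)).
rewrite eigvec_coord mulmx0 => /matrixP/(_ j 0); rewrite !mxE !eqxx /=.
by move/eqP; rewrite oner_eq0.
Qed.

(* A nonnegative spectrum is bounded by the operator norm of A, each s_j being
   attained at the j-th eigenvector. *)
Lemma diag_le_opnorm : (forall j, 0 <= s 0 j) -> forall j, s 0 j <= opnorm A.
Proof.
move=> s0 j; rewrite /opnorm; set E := [set r | _].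
pose B := \sum_i s 0 i.
have sB i : s 0 i <= B by rewrite /B (bigD1 i) //= lerDl sumr_ge0.
have Ej : E (s 0 j).
  exists (V *m delta_mx j 0); rewrite !vnorm_sqnorm -orth_sqnorm eigvec_coord.
  rewrite sqnorm_image eigvec_coord !sqnorm_sum.
  rewrite (@sum_delta (fun _ x => x ^+ 2)) ?(@sum_delta (fun k x => (s 0 k * x) ^+ 2))
    => [| k | k]; rewrite ?mulr0 ?expr0n //.
  by rewrite expr1n sqrtr1 mulr1 sqrtr_sqr ger0_norm.
have EB r : E r -> r <= B.
  move=> [v [hv ->]]; rewrite vnorm_sqnorm.
  have hv1 : sqnorm v <= 1 by move: hv; rewrite vnorm_sqnorm -[X in _ <= X]sqrtr1 ler_sqrt.
  have B0 : 0 <= B := le_trans (s0 j) (sB j).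
  rewrite -(ger0_norm B0) -sqrtr_sqr; apply: ler_wsqrtr.
  apply: (@le_trans _ _ (B ^+ 2 * sqnorm v)); last first.
    by rewrite -[X in _ <= X]mulr1 ler_wpM2l ?sqr_ge0.
  rewrite sqnorm_image -orth_sqnorm sqnorm_sum mulr_sumr; apply: ler_sum => i _.
  rewrite exprMn ler_wpM2r ?sqr_ge0 // lerXn2r ?nnegrE ?s0 ?sB //.
by apply: sup_upper_bound => //; split; [exists (s 0 j) | exists B].
Qed.

Lemma sqnorm_le_coord (u w : 'cV[R]_n) c :
  (forall j, (V^T *m u) j 0 ^+ 2 <= c * (V^T *m w) j 0 ^+ 2) ->
  sqnorm u <= c * sqnorm w.
Proof.
move=> hc; rewrite -orth_sqnorm -(orth_sqnorm w) !sqnorm_sum mulr_sumr.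
by apply: ler_sum => j _; exact: hc.
Qed.

Lemma quad_le_coord (u w : 'cV[R]_n) c : (forall j, 0 <= s 0 j) ->
  (forall j, (V^T *m u) j 0 ^+ 2 <= c * (V^T *m w) j 0 ^+ 2) ->
  quad A u <= c * quad A w.
Proof.
move=> s0 hc; rewrite !quad_diag mulr_sumr; apply: ler_sum => j _.
by rewrite [X in _ <= X]mulrCA; apply: ler_wpM2l.
Qed.

Lemma invmx_diag_shift (lam : R) : (forall j, 0 < s 0 j + lam) ->
  invmx (A + lam%:M) = V *m diag_mx (\row_j (s 0 j + lam)^-1) *m V^T.
Proof.
move=> hpos; pose M := V *m diag_mx (\row_j (s 0 j + lam)^-1) *m V^T.
have diagM (d1 d2 : 'rV[R]_n) :
    diag_mx d1 *m diag_mx d2 = diag_mx (\row_j (d1 0 j * d2 0 j)).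
  apply/matrixP => i j; rewrite mul_diag_mx !mxE.
  by case: eqVneq => _; rewrite ?mulr1n ?mulr0n ?mulr0.
have shift : A + lam%:M = V *m diag_mx (\row_j (s 0 j + lam)) *m V^T.
  have -> : lam%:M = V *m diag_mx (\row_j lam) *m V^T.
    rewrite (_ : diag_mx _ = lam%:M); first by rewrite mul_mx_scalar -scalemxAl VVt scalemx1.
    by apply/matrixP => i j; rewrite !mxE.
  rewrite -mulmxDl -mulmxDr; congr (_ *m _ *m _).
  by apply/matrixP => i j; rewrite !mxE mulrnDl.
have inv : (A + lam%:M) *m M = 1%:M.
  rewrite shift /M !mulmxA -[_ *m V^T *m V]mulmxA VtV mulmx1.
  rewrite -[_ *m diag_mx _ *m diag_mx _]mulmxA diagM (_ : diag_mx _ = 1%:M).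
    by rewrite mulmx1 VVt.
  by apply/matrixP => i j; rewrite !mxE mulfV // lt0r_neq0.
have [U _] := mulmx1_unit inv.
by rewrite -[RHS](mulKmx U) inv mulmx1.
Qed.

End OrthogonalDiagonalization.

Section SpectralCoordinates.
Variables (R : realType) (N n : nat) (X : 'M[R]_(N, n)) (y : 'cV[R]_N).
Variables (V : 'M[R]_n) (s : 'rV[R]_n).
Hypothesis VtV : V^T *m V = 1%:M.
Hypothesis XtX : X^T *m X = V *m diag_mx s *m V^T.
Hypothesis s_pos : forall j, 0 < s 0 j.
Local Notation b := (V^T *m (X^T *m y)).

Lemma gd_coord eta t j :
  (V^T *m gd X y eta t) j 0 = b j 0 * ((1 - (1 - eta * s 0 j) ^+ t) / s 0 j).
Proof.
elim: t j => [|t IH] j /=; first by rewrite mulmx0 !mxE expr0 subrr mul0r mulr0.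
set w := gd X y eta t in IH *.
have -> : V^T *m (w + eta *: (X^T *m (y - X *m w))) =
    V^T *m w + eta *: (b - diag_mx s *m (V^T *m w)).
  rewrite mulmxDr -scalemxAr !mulmxBr; congr (_ + eta *: (_ - _)).
  by rewrite [X^T *m _]mulmxA XtX !mulmxA VtV mul1mx.
rewrite mul_diag_mx; set g := V^T *m w in IH *; set c := b.
have -> : (g + eta *: (c - \matrix_(i, k) (s 0 i * g i k))) j 0
    = g j 0 + eta * (c j 0 - s 0 j * g j 0) by rewrite !mxE.
rewrite IH exprS.
by have := s_pos j; move: (s 0 j) => sj sj0; field; exact: lt0r_neq0.
Qed.

Lemma ridge_coord lam j : 0 < lam ->
  (V^T *m ridge X y lam) j 0 = b j 0 / (s 0 j + lam).
Proof.
move=> lam0; rewrite /ridge XtX invmx_diag_shift // => [|k]; last exact: addr_gt0.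
set D := diag_mx _; set z := X^T *m y.
have -> : V^T *m (V *m D *m V^T *m z) = D *m (V^T *m z) by rewrite !mulmxA VtV mul1mx.
rewrite mul_diag_mx; set c := V^T *m z.
by rewrite [LHS]mxE [_ 0 j]mxE mulrC.
Qed.

Lemma shrinkage_coord smin eta t :
  0 < smin -> (forall j, smin <= s 0 j) -> 0 < eta ->
  (forall j, eta * s 0 j <= 1) -> (1 <= t)%N ->
  forall j, (V^T *m (gd X y eta t - ridge X y (1 / (t%:R * eta)))) j 0 ^+ 2
    <= cte smin t eta * (V^T *m gd X y eta t) j 0 ^+ 2.
Proof.
move=> smin0 smin_le eta0 eta_s t1 j.
have lam0 : 0 < 1 / (t%:R * eta) by rewrite divr_gt0 // mulr_gt0 // ltr0n.
set wt := gd X y eta t; set wl := ridge X y _.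
have -> : (V^T *m (wt - wl)) j 0 = (V^T *m wt) j 0 - (V^T *m wl) j 0.
  by rewrite mulmxBr !mxE.
rewrite gd_coord ridge_coord // -mulrBr exprMn exprMn [cte _ _ _ * _]mulrCA.
apply: ler_wpM2l; first exact: sqr_ge0.
by rewrite -[(_ + _)^-1]div1r; exact: spectral_filter_gap.
Qed.

End SpectralCoordinates.

Lemma linf_datapt (R : realType) N d (X : 'M[R]_(N, d)) (w : 'cV[R]_d) i :
  linf w (datapt X i) = (X *m w) i 0.
Proof. by rewrite /linf mxE; apply: eq_bigr => j _; rewrite !mxE mulrC. Qed.

Lemma sum_datapt_sq (R : realType) N d (X : 'M[R]_(N, d)) (w : 'cV[R]_d) :
  \sum_i linf w (datapt X i) ^+ 2 = quad (X^T *m X) w.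
Proof.
under eq_bigr do rewrite linf_datapt.
by rewrite -sqnorm_sum trmx_mul !mulmxA.
Qed.

Lemma linf_sub (R : realType) d (a b x : 'cV[R]_d) :
  linf a x - linf b x = linf (a - b) x.
Proof. by rewrite /linf -sumrB; apply: eq_bigr => j _; rewrite !mxE mulrBl. Qed.

Lemma sup_max (R : realType) (E : set R) m :
  E m -> (forall e, E e -> e <= m) -> sup E = m.
Proof.
move=> Em ub; apply/le_anti/andP; split.
  by apply: (ge_sup (E := E)); [exists m | exact: ub].
by apply: sup_upper_bound => //; split; [exists m | exists m].
Qed.

Lemma inf_min (R : realType) (E : set R) m :
  E m -> (forall e, E e -> m <= e) -> inf E = m.
Proof.
move=> Em lb; rewrite /inf (@sup_max _ _ (- m)) ?opprK //.
by move=> _ [e Ee <-]; rewrite lerN2; exact: lb.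
Qed.

Lemma eigenvalue_quad (R : realType) n (S : 'M[R]_n) e : eigenvalue S e ->
  exists2 u : 'cV[R]_n, 0 < sqnorm u & quad S u = e * sqnorm u.
Proof.
move=> /eigenvalueP [v ve vn0]; exists v^T; last first.
  by rewrite trmxK ve -scalemxAl [LHS]mxE.
rewrite sqnorm_sum lt_neqAle sumr_ge0 ?andbT => [|i _]; last exact: sqr_ge0.
apply/eqP => /esym /psumr_eq0P v0; move/negP: vn0; apply; apply/eqP/rowP => j.
have := v0 (fun i _ => sqr_ge0 _) j isT; rewrite mxE => /eqP.
by rewrite sqrf_eq0 => /eqP ->; rewrite mxE.
Qed.

Lemma extreme_eigenvalues (R : realType) n (S : 'M[R]_n.+1) : S^T = S ->
  (forall v : 'cV[R]_n.+1, v != 0 -> 0 < quad S v) ->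
  exists a b : R, [/\ 0 < a, a <= b, inf (eigs S) = a, sup (eigs S) = b &
    forall u : 'cV[R]_n.+1, a * sqnorm u <= quad S u /\ quad S u <= b * sqnorm u].
Proof.
move=> symS PD; have [a [b [eig_a eig_b bnd]]] := @rayleigh R n S symS.
have in_range e : eigenvalue S e -> a <= e /\ e <= b.
  move=> /eigenvalue_quad [u u0 qe]; have [h1 h2] := bnd u; rewrite qe in h1 h2.
  by split; [rewrite -(ler_pM2r u0) | rewrite -(ler_pM2r u0)].
exists a, b; split => //.
- have [u u0 qe] := eigenvalue_quad eig_a.
  have un0 : u != 0 by apply: contraTneq u0 => ->; rewrite mulmx0 mxE ltxx.
  by have := PD u un0; rewrite qe pmulr_lgt0.
- by have [] := in_range _ eig_b.
- by apply: inf_min => // e /in_range [].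
- by apply: sup_max => // e /in_range [].
Qed.

Lemma quad_le_cond_number (R : realType) n (S : 'M[R]_n.+1) (u w : 'cV[R]_n.+1) c :
  S^T = S -> (forall v : 'cV[R]_n.+1, v != 0 -> 0 < quad S v) ->
  0 <= c -> sqnorm u <= c * sqnorm w ->
  quad S u <= cond_number S * c * quad S w.
Proof.
move=> symS PD c0 uw; rewrite /cond_number.
have [a [b [a0 ab -> -> bnd]]] := extreme_eigenvalues symS PD.
have b0 : 0 < b := lt_le_trans a0 ab.
apply: (le_trans (bnd u).2); apply: (@le_trans _ _ (b * (c * sqnorm w))).
  by rewrite ler_pM2l.
rewrite (_ : b * (c * _) = b / a * c * (a * sqnorm w)); last first.
  by field; exact: lt0r_neq0.
by rewrite ler_wpM2l ?(bnd w).1 // mulr_ge0 // divr_ge0 ?ltW.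
Qed.

(* |a b| <= a^2 + b^2: square integrability of the coordinates gives
   integrability of their products. *)
Lemma normM_le (R : realType) (a b : R) : `|a * b| <= `|a ^+ 2 + b ^+ 2|.
Proof.
rewrite normrM (ger0_norm (addr_ge0 (sqr_ge0 a) (sqr_ge0 b))).
rewrite -(real_normK (num_real a)) -(real_normK (num_real b)).
move: (normr_ge0 a) (normr_ge0 b); move: `|a| `|b| => p q hp hq.
have := sqr_ge0 (p - q); nra.
Qed.

Lemma second_moment_quad (R : realType) (d0 : measure_display) (T : measurableType d0)
  (P : probability T R) n (x : T -> 'cV[R]_n) :
  (forall j, measurable_fun setT (fun w => x w j 0)) ->
  (forall j, P.-integrable setT (fun w => ((x w j 0) ^+ 2)%:E)) ->
  forall u : 'cV[R]_n,
  (\int[P]_w ((linf u (x w)) ^+ 2)%:E =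
   (quad (\matrix_(j, k) Rintegral P setT (fun w => x w j 0 * x w k 0)) u)%:E)%E.
Proof.
move=> hm hi u.
have iprod j k : P.-integrable setT (fun w => (x w j 0 * x w k 0)%:E).
  apply: (le_integrable measurableT _ _ (integrableD measurableT (hi j) (hi k))).
    by apply/measurable_realfun.measurable_EFinP; apply: measurable_realfun.measurable_funM.
  by move=> w _; rewrite /= lee_fin normM_le.
have -> : (fun w => ((linf u (x w)) ^+ 2)%:E) =
    (fun w => \sum_(j < n) \sum_(k < n) ((u j 0 * u k 0)%:E * (x w j 0 * x w k 0)%:E))%E.
  apply/funext => w; rewrite /linf expr2 mulr_suml -sumEFin.
  apply: eq_bigr => j _; rewrite mulr_sumr -sumEFin; apply: eq_bigr => k _.
  by rewrite -EFinM; congr (_%:E); ring.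
rewrite integral_sum //; last first.
  by move=> j; apply: integrable_sum => // k _; exact: integrableZl.
set M := \matrix_(j, k) _.
have -> : quad M u = \sum_(j < n) \sum_(k < n) (u j 0 * u k 0) * M j k.
  rewrite mxE; under eq_bigr do rewrite mxE mulr_suml.
  rewrite exchange_big /=; apply: eq_bigr => j _; apply: eq_bigr => k _.
  by rewrite !mxE; ring.
rewrite -sumEFin; apply: eq_bigr => j _.
rewrite integral_sum //; last by move=> k; exact: integrableZl.
rewrite -sumEFin; apply: eq_bigr => k _.
rewrite integralZl // /M mxE /Rintegral [RHS]EFinM fineK //.
exact: integrable_fin_num.
Qed.

Theorem proposition2 (R : realType) (N d : nat)
  (X : 'M[R]_(N, d.+1)) (y : 'cV[R]_N)
  (V : 'M[R]_d.+1) (s : 'rV[R]_d.+1)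
  (eta : R) (t : nat)
  (d0 : measure_display) (T : measurableType d0) (P : probability T R)
  (x : T -> 'cV[R]_d.+1) :
  V^T *m V = 1%:M ->
  X^T *m X = V *m diag_mx s *m V^T ->
  (forall v : 'cV[R]_d.+1, v != 0 -> 0 < (v^T *m (X^T *m X) *m v) 0 0) ->
  0 < eta -> eta <= 1 / opnorm (X^T *m X) ->
  (1 <= t)%N ->
  let smin := \big[Num.min/s 0 ord0]_(i < d.+1) s 0 i in
  let lambda := 1 / (t%:R * eta) in
  let wt := gd X y eta t in
  let wl := ridge X y lambda in
  let c := cte smin t eta in
  (* first claim: on the training points *)
  \sum_(i < N) (linf wt (datapt X i) - linf wl (datapt X i)) ^+ 2
    <= c * \sum_(i < N) linf wt (datapt X i) ^+ 2
  /\
  (* second claim: for any distribution D_X (the law of x under P) with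
     finite, positive definite second-moment matrix Sigma *)
  ((forall j, measurable_fun setT (fun w => x w j 0)) ->
   (forall j, P.-integrable setT (fun w => ((x w j 0) ^+ 2)%:E)) ->
   let Sigma := \matrix_(j, k) Rintegral P setT (fun w => x w j 0 * x w k 0) in
   (forall v : 'cV[R]_d.+1, v != 0 -> 0 < (v^T *m Sigma *m v) 0 0) ->
   let kappa := cond_number Sigma in
   (\int[P]_w ((linf wt (x w) - linf wl (x w)) ^+ 2)%:E
     <= (kappa * c)%:E * \int[P]_w ((linf wt (x w)) ^+ 2)%:E)%E).
Proof.
move=> VtV XtX PD eta0 eta_op t1 smin lambda wt wl c.
rewrite XtX in PD eta_op *.
have s_pos := diag_pos VtV PD.
have smin0 : 0 < smin by apply: lt_bigmin.
have smin_le j : smin <= s 0 j by exact: bigmin_le.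
have eta_s j : eta * s 0 j <= 1.
  have s_op := diag_le_opnorm VtV (fun k => ltW (s_pos k)) j.
  have op0 := lt_le_trans (s_pos j) s_op.
  by rewrite (le_trans (ler_wpM2l (ltW eta0) s_op)) // -ler_pdivlMr.
have coord := shrinkage_coord y VtV XtX s_pos smin0 smin_le eta0 eta_s t1.
have c0 : 0 <= c.
  rewrite /c /cte le_min; apply/andP; split; first by [].
  by apply: divr_ge0 => //; apply: mulr_ge0; [apply: mulr_ge0|]; exact: sqr_ge0.
split.
  under eq_bigr do rewrite linf_sub.
  rewrite !sum_datapt_sq XtX.
  exact: quad_le_coord (fun j => ltW (s_pos j)) coord.
move=> hm hi Sigma PD_Sigma; cbv zeta.
have sym_Sigma : Sigma^T = Sigma.
  by apply/matrixP => i j; rewrite !mxE; apply: eq_Rintegral => w _; exact: mulrC.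
under eq_fun do rewrite linf_sub.
rewrite !second_moment_quad // -EFinM lee_fin.
exact: quad_le_cond_number sym_Sigma PD_Sigma c0 (sqnorm_le_coord VtV coord).
Qed.
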